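(* Let $K$ be a finite field and $n>1$. A $K$-linear code $\mathcal{C}\subseteq K^n$ is a quasi-$G$ code (of some index) for some nontrivial finite group $G$ if and only if it is a quasi-cyclic code, i.e. a quasi-$C$ code for some nontrivial finite cyclic group $C$. In other words, the class of quasi group codes of length $n>1$ with respect to nontrivial groups coincides with the class of quasi-cyclic codes of length $n>1$.
   Context: For a finite group $G$, a quasi-$G$ code of index $\ell$ is a $K$-linear code in $K^{\ell|G|}$ which, under some identification of the coordinate set with $\{1,\ldots,\ell\}\times G$ (equivalently, of $K^{\ell|G|}$ with $KG^\ell=KG\oplus\cdots\oplus KG$, each $KG$ identified with $K^{|G|}$ via $\sum_i a_ig_i\mapsto(a_i)_i$), is a right $KG$-submodule of $KG^\ell$. A quasi-cyclic code of index $\ell$ is a quasi-$G$ code of index $\ell$ with $G$ cyclic. *)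

From HB Require Import structures.
From mathcomp Require Import all_boot all_order all_algebra all_fingroup all_solvable all_field.
Set Implicit Arguments. Unset Strict Implicit. Unset Printing Implicit Defensive.
Import GRing.Theory.
Local Open Scope ring_scope.

(* C is a quasi-G code of index l (G = the whole finite group gT) if there is
   a bijection f : {1..l} x G -> {1..n} of coordinates (identifying K^n with
   KG^l, the coordinate (i,h) being the coefficient of h in the i-th KG
   component) such that C is a right KG-submodule, i.e. (being already a
   K-subspace) stable under right multiplication by every g in G:
   (sum_h a_{i,h} h) g = sum_h a_{i,h g^-1} h. *)
Definition quasi_group_code_of_index (K : fieldType) (n : nat)
    (gT : finGroupType) (l : nat) (C : {vspace 'rV[K]_n}) : Prop :=
  exists f : 'I_l * gT -> 'I_n,
    bijective f /\
    forall v : 'rV[K]_n, v \in C -> forall g : gT,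
      exists2 w : 'rV[K]_n, w \in C &
        forall (i : 'I_l) (h : gT), w 0 (f (i, h)) = v 0 (f (i, (h * g^-1)%g)).

Definition quasi_group_code (K : fieldType) (n : nat)
    (gT : finGroupType) (C : {vspace 'rV[K]_n}) : Prop :=
  exists l : nat, quasi_group_code_of_index gT l C.

(* If C is stable under right translation by the whole group G, it is a
   fortiori stable under right translation by any subgroup H. Writing every
   g in G uniquely as r h, with r a fixed representative of the left coset
   g H and h in H, turns the coordinate set {1..l} x G into
   ({1..l} x reps) x H, so C is a quasi-H code of index l [G : H]. Taking
   H = <[x]> for some x <> 1 gives a nontrivial cyclic group. *)
From HB Require Import structures.
From mathcomp Require Import all_boot all_order all_algebra all_fingroup all_solvable all_field.
Set Implicit Arguments.
Unset Strict Implicit.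
Local Open Scope group_scope.

Section LeftCosetDecomposition.
Variables (gT : finGroupType) (H : {group gT}).

Definition lcoset_repr := {r : gT | r == repr (r *: H)}.

Definition lcoset_repr_mul (p : lcoset_repr * subg_of H) : gT :=
  val p.1 * sgval p.2.

Lemma repr_lcoset_mem (g : gT) : repr (g *: H) \in g *: H.
Proof. exact/mem_repr/lcoset_refl. Qed.

Lemma repr_lcoset_repr (g : gT) : repr (g *: H) == repr (repr (g *: H) *: H).
Proof. by rewrite (lcoset_eqP (repr_lcoset_mem g)). Qed.

Lemma repr_lcoset_divg (g : gT) : (repr (g *: H))^-1 * g \in H.
Proof.
have := repr_lcoset_mem g; rewrite mem_lcoset => Hg.
by rewrite -[X in X \in _]invgK invMg invgK groupV.
Qed.

Definition lcoset_repr_split (g : gT) : lcoset_repr * subg_of H :=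
  (exist _ (repr (g *: H)) (repr_lcoset_repr g),
   subg H ((repr (g *: H))^-1 * g)).

Lemma lcoset_repr_mulK : cancel lcoset_repr_mul lcoset_repr_split.
Proof.
move=> [[r r_repr] h]; rewrite /lcoset_repr_mul /lcoset_repr_split /=.
have rhH : (r * sgval h) *: H = r *: H.
  by apply/lcoset_eqP; rewrite mem_lcoset mulKg subgP.
have repr_rh : repr ((r * sgval h) *: H) = r by rewrite rhH -(eqP r_repr).
congr (_, _); apply: val_inj; rewrite /= repr_rh //.
by rewrite mulKg subgK ?subgP.
Qed.

Lemma lcoset_repr_splitK : cancel lcoset_repr_split lcoset_repr_mul.
Proof.
by move=> g; rewrite /lcoset_repr_mul /= subgK ?repr_lcoset_divg ?mulKVg.
Qed.

End LeftCosetDecomposition.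

Lemma quasi_group_code_subg (K : fieldType) (n : nat) (gT : finGroupType)
    (H : {group gT}) (C : {vspace 'rV[K]_n}) :
  quasi_group_code gT C -> quasi_group_code (subg_of H) C.
Proof.
move=> [l [f [f_bij f_transl]]].
pose I : finType := ('I_l * lcoset_repr H)%type.
pose regroup (p : 'I_#|I| * subg_of H) :=
  ((enum_val p.1).1, lcoset_repr_mul ((enum_val p.1).2, p.2)).
exists #|I|, (f \o regroup); split.
  apply: (bij_comp f_bij).
  pose split_index (q : 'I_l * gT) :=
    (enum_rank (q.1, (lcoset_repr_split H q.2).1), (lcoset_repr_split H q.2).2).
  exists split_index => [[i h] | [i g]]; rewrite /regroup /split_index.
    by rewrite lcoset_repr_mulK /= -surjective_pairing enum_valK.
  by rewrite enum_rankK -surjective_pairing lcoset_repr_splitK.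
move=> v vC h.
have [w wC w_transl] := f_transl v vC (sgval h).
by exists w => // i k; rewrite /= w_transl /lcoset_repr_mul /= -mulgA.
Qed.

Lemma nontrivial_cyclic_subg (gT : finGroupType) :
  1 < #|gT| -> exists x : gT, 1 < #|subg_of <[x]>| /\ cyclic [set: subg_of <[x]>].
Proof.
move=> gT_gt1.
have : [set: gT] :!=: 1 by rewrite -cardG_gt1 cardsT.
case/trivgPn => x _ x_neq1; exists x.
rewrite -(isog_cyclic (isog_subg <[x]>%G)) cycle_cyclic; split=> //.
by rewrite -cardsT -(card_isog (isog_subg <[x]>%G)) (order_gt1 x).
Qed.

Theorem mainTheorem3 (K : finFieldType) (n : nat) (C : {vspace 'rV[K]_n}) :
  1 < n ->
  ((exists gT : finGroupType, 1 < #|gT| /\ quasi_group_code gT C) <->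
   (exists gT : finGroupType,
       [/\ 1 < #|gT|, cyclic [set: gT] & quasi_group_code gT C])).
Proof.
move=> _; split=> [[gT [gT_gt1 C_quasi]] | [gT [gT_gt1 _ C_quasi]]]; last by exists gT.
have [x [x_gt1 x_cyclic]] := nontrivial_cyclic_subg gT_gt1.
by exists (subg_of <[x]>); split=> //; apply: quasi_group_code_subg.
Qed.
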